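(* Let $G$ be a group with elements $A,B,C,D$ such that $A$ commutes with $B$, $B$ commutes with $C$, $C$ commutes with $D$ and $D$ commutes with $A$. If neither of the subgroups $\langle A,C\rangle$ and $\langle B,D\rangle$ is soluble, then $G$ does not embed in $GL(3,\mathbb{F})$ for any field $\mathbb{F}$. *)

(* Abstract (possibly infinite) groups are given as a carrier
   type with explicit operations satisfying the group axioms. *)
From HB Require Import structures.
From mathcomp Require Import all_boot all_order all_algebra.
Set Implicit Arguments.
Unset Strict Implicit.
Unset Printing Implicit Defensive.
Import GRing.Theory.
Local Open Scope ring_scope.

Definition is_group (T : Type) (mul : T -> T -> T) (one : T) (inv : T -> T)
  : Prop :=
  [/\ (forall x y z, mul x (mul y z) = mul (mul x y) z),
      (forall x, mul one x = x),
      (forall x, mul x one = x),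
      (forall x, mul (inv x) x = one) &
      (forall x, mul x (inv x) = one)].

Definition is_subgroup (T : Type) (mul : T -> T -> T) (one : T)
  (inv : T -> T) (H : T -> Prop) : Prop :=
  [/\ H one, (forall x y, H x -> H y -> H (mul x y)) &
      (forall x, H x -> H (inv x))].

Definition gen (T : Type) (mul : T -> T -> T) (one : T) (inv : T -> T)
  (S : T -> Prop) : T -> Prop :=
  fun x => forall H, is_subgroup mul one inv H ->
                     (forall y, S y -> H y) -> H x.

Definition commg (T : Type) (mul : T -> T -> T) (inv : T -> T) (x y : T) : T :=
  mul (mul (inv x) (inv y)) (mul x y).

Definition derived (T : Type) (mul : T -> T -> T) (one : T) (inv : T -> T)
  (H : T -> Prop) : T -> Prop :=
  gen mul one inv (fun z => exists x y, [/\ H x, H y & z = commg mul inv x y]).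

Fixpoint derived_series (T : Type) (mul : T -> T -> T) (one : T)
  (inv : T -> T) (H : T -> Prop) (n : nat) : T -> Prop :=
  match n with
  | 0 => H
  | n'.+1 => derived mul one inv (derived_series mul one inv H n')
  end.

Definition soluble (T : Type) (mul : T -> T -> T) (one : T) (inv : T -> T)
  (H : T -> Prop) : Prop :=
  exists n, forall x, derived_series mul one inv H n x -> x = one.

Definition embeds_in_GL3 (T : Type) (mul : T -> T -> T) (F : fieldType) : Prop :=
  exists phi : T -> 'M[F]_3,
    [/\ (forall g, phi g \in unitmx),
        (forall x y, phi (mul x y) = phi x *m phi y) &
        injective phi].

(* Let a, b, c, d be the images of A, B, C, D in GL(3, F).  If a and c
   commuted, or stabilized a common flag (a line inside a plane), the group
   <A, C> would be abelian, resp. triangularizable, hence soluble: the k-th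
   derived subgroup of the stabilizer of a complete flag (V_i) maps every
   V_(i+k) into V_i under g - 1.  The same holds for b and d.
   One of b, d is not scalar; call it y.  It centralizes a and c, so it has an
   eigenvalue m (otherwise y would be cyclic, a and c would be polynomials in
   y and would commute), and the kernel and the image of y - m are an
   (a, c)-invariant line l and plane p, with l not in p.  Every invertible
   matrix centralizing a and c preserves p and acts on it as a scalar, since
   otherwise a and c would commute on p and on l, hence everywhere.  Thus b
   and d are scalar on p, and any line of p completes p to a flag stabilized
   by b and d. *)

From HB Require Import structures.
From mathcomp Require Import all_boot all_order all_algebra zify.

Set Implicit Arguments.
Unset Strict Implicit.
Unset Printing Implicit Defensive.

Import GRing.Theory.

Section Solubility.

Variables (T : Type) (mul : T -> T -> T) (one : T) (inv : T -> T).
Hypothesis HG : is_group mul one inv.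

Lemma trivial_subgroup : is_subgroup mul one inv (fun x => x = one).
Proof.
case: HG => _ mul1x _ _ mulxV.
by split=> // [x y -> ->|x ->]; rewrite ?mul1x // -[inv one]mul1x mulxV.
Qed.

Lemma gen_subgroup S : is_subgroup mul one inv (gen mul one inv S).
Proof.
split=> [H [] //|x y Sx Sy H sgH SH|x Sx H sgH SH]; case: (sgH) => _ HM HV.
  exact: HM (Sx H sgH SH) (Sy H sgH SH).
exact: HV (Sx H sgH SH).
Qed.

Lemma commg_of_comm x y : mul x y = mul y x -> commg mul inv x y = one.
Proof.
case: HG => mulA mul1x _ mulVx _ cxy.
by rewrite /commg cxy -mulA (mulA (inv y)) mulVx mul1x mulVx.
Qed.

Definition centralizer (X : T -> Prop) : T -> Prop :=
  fun g => forall x, X x -> mul g x = mul x g.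

Lemma centralizer_subgroup X : is_subgroup mul one inv (centralizer X).
Proof.
case: HG => mulA mul1x mulx1 mulVx mulxV.
split=> [x _|g h cg ch x Xx|g cg x Xx]; first by rewrite mul1x mulx1.
  by rewrite -mulA ch // !mulA cg.
by rewrite -[mul _ x]mulx1 -(mulxV g) mulA -(mulA (inv g)) -cg // mulA mulVx mul1x.
Qed.

Lemma gen_abelian S : (forall x y, S x -> S y -> mul x y = mul y x) ->
  forall x y, gen mul one inv S x -> gen mul one inv S y -> mul x y = mul y x.
Proof.
move=> cS.
have genS_cent : forall x, gen mul one inv S x -> centralizer S x.
  by move=> x; apply; [exact: centralizer_subgroup | move=> s Ss y; apply: cS].
move=> x y Sx Sy; apply: (Sx _ (centralizer_subgroup _)) Sy => s Ss z Sz.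
by rewrite (genS_cent z Sz s Ss).
Qed.

Lemma soluble_gen_of_chain S (P : nat -> T -> Prop) N :
  (forall k, is_subgroup mul one inv (P k)) -> (forall s, S s -> P 0 s) ->
  (forall k x y, P k x -> P k y -> P k.+1 (commg mul inv x y)) ->
  (forall x, P N x -> x = one) ->
  soluble mul one inv (gen mul one inv S).
Proof.
move=> sgP SP Pcomm PN; exists N => x Dx; apply: PN; move: x Dx.
elim: N => [|k IHk] x /=; first by apply; [exact: sgP | exact: SP].
apply; first exact: sgP.
by move=> _ [y [z [Dy Dz ->]]]; apply: Pcomm (IHk _ Dy) (IHk _ Dz).
Qed.

Lemma soluble_gen_abelian S : (forall x y, S x -> S y -> mul x y = mul y x) ->
  soluble mul one inv (gen mul one inv S).
Proof.
move=> cS.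
pose P k := if k is 0 then gen mul one inv S else eq^~ one.
apply: (@soluble_gen_of_chain S P 1).
- by case=> [|k]; [exact: gen_subgroup | exact: trivial_subgroup].
- by move=> s Ss H _; apply.
- case=> [|k] x y Sx Sy /=; first exact: commg_of_comm (gen_abelian cS Sx Sy).
  by rewrite Sx Sy commg_of_comm.
- by [].
Qed.

End Solubility.

Local Open Scope ring_scope.

Section Stability.

Variables (F : fieldType) (n : nat).

Lemma mxrank_adds_row m (U : 'M[F]_(m, n)) (w : 'rV[F]_n) :
  ~~ (w <= U)%MS -> \rank (U + w)%MS = (\rank U).+1.
Proof.
move=> wU; have w0 : w != 0 by apply: contraNneq wU => ->; rewrite sub0mx.
have : (\rank (U :&: w) < \rank w)%N.
  by apply: rank_ltmx; rewrite ltmxE capmxSr sub_capmx submx_refl andbT.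
rewrite rank_rV w0 ltnS leqn0 => /eqP capUw.
by have := mxrank_sum_cap U w; rewrite capUw rank_rV w0 addn0 addn1.
Qed.

Lemma scalar_on_quotient (U W M : 'M[F]_n) :
  (U <= W)%MS -> (\rank W <= (\rank U).+1)%N -> stablemx W M -> stablemx U M ->
  exists c, (W *m (M - c%:M) <= U)%MS.
Proof.
move=> UW rW WM UM.
have shiftM (V : 'M_n) c : stablemx V M -> stablemx V (M - c%:M).
  by move=> VM; rewrite stablemxD ?stablemxN ?stablemxC.
have [WU|/row_subPn[i wU]] := boolP (W <= U)%MS.
  by exists 0; apply: submx_trans WU; apply: shiftM.
set w := row i W in wU.
have Uw_W : (U + w <= W)%MS by rewrite addsmx_sub UW row_sub.
have W_Uw : (W <= U + w)%MS.
  have /mxrank_leqif_sup[_ <-] := Uw_W.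
  by rewrite eqn_leq mxrankS // mxrank_adds_row.
have /sub_addsmxP[[u x] /= wM] : (w *m M <= U + w)%MS.
  exact: submx_trans (submx_trans (submxMr M (row_sub i W)) WM) W_Uw.
exists (x 0 0); apply: submx_trans (submxMr _ W_Uw) _.
rewrite addsmxMr addsmx_sub shiftM // mulmxBr mul_mx_scalar wM {1}[x]mx11_scalar.
by rewrite mul_scalar_mx addrK submxMl.
Qed.

Lemma stablemx_invmx (W M : 'M[F]_n) :
  M \in unitmx -> stablemx W M -> stablemx W (invmx M).
Proof.
move=> Mu WM; have /mxrank_leqif_sup[_] := WM.
rewrite mxrankMfree ?row_free_unit // eqxx => /esym/(submxMr (invmx M)).
by rewrite -mulmxA mulmxV // mulmx1.
Qed.

Lemma stablemx_cap (X Y f : 'M[F]_n) :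
  stablemx X f -> stablemx Y f -> stablemx (X :&: Y)%MS f.
Proof.
move=> Xf Yf; rewrite sub_capmx (submx_trans (submxMr _ (capmxSl X Y))) //.
exact: submx_trans (submxMr _ (capmxSr X Y)) Yf.
Qed.

Lemma stablemx_mul_comm (X f k : 'M[F]_n) :
  comm_mx f k -> stablemx X f -> stablemx (X *m k) f.
Proof. by move=> fk Xf; rewrite -mulmxA -fk mulmxA submxMr. Qed.

Lemma commutator_shift (M N : 'M[F]_n) c :
  (M - c%:M) *m N - N *m (M - c%:M) = M *m N - N *m M.
Proof.
by rewrite mulmxBl mulmxBr mul_mx_scalar mul_scalar_mx opprB addrA subrK.
Qed.

Lemma commutator_sub m (W : 'M[F]_(m, n)) (U U' X M N : 'M[F]_n) c d :
  (W *m (M - c%:M) <= U)%MS -> (U *m (N - d%:M) <= X)%MS ->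
  (W *m (N - d%:M) <= U')%MS -> (U' *m (M - c%:M) <= X)%MS ->
  (W *m (M *m N - N *m M) <= X)%MS.
Proof.
move=> WU UX WU' U'X.
rewrite -(commutator_shift M N c) -opprB -(commutator_shift N _ d) opprB.
rewrite mulmxBr !mulmxA addmx_sub ?eqmx_opp //.
  exact: submx_trans (submxMr _ WU) UX.
exact: submx_trans (submxMr _ WU') U'X.
Qed.

Lemma commutator_on_line (l a c : 'M[F]_n) :
  (\rank l <= 1)%N -> stablemx l a -> stablemx l c -> l *m (a *m c - c *m a) = 0.
Proof.
move=> rl la lc; have l0 : ((0 : 'M[F]_n) <= l)%MS := sub0mx _ _.
have r0 : (\rank l <= (\rank (0 : 'M[F]_n)%R).+1)%N by rewrite mxrank0.
have [x lx] := scalar_on_quotient l0 r0 la (stable0mx _ _).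
have [y ly] := scalar_on_quotient l0 r0 lc (stable0mx _ _).
by apply/eqP; rewrite -submx0; apply: commutator_sub lx _ ly _; rewrite mul0mx.
Qed.

End Stability.

Section Cyclic.

Variables (F : fieldType) (n : nat).

Lemma cyclic_span (k : 'M[F]_n.+1) (v w : 'rV[F]_n.+1) :
  (w <= v + v *m k + v *m k *m k)%MS -> exists p, w = v *m horner_mx k p.
Proof.
case/sub_addsmxP=> [[u z] /= ->].
have /sub_addsmxP[[x y] /= ->] : (u *m (v + v *m k)%MS <= v + v *m k)%MS.
  exact: submxMl.
exists ((x 0 0)%:P + y 0 0 *: 'X + z 0 0 *: ('X * 'X)).
rewrite !rmorphD /= !linearZ /= rmorphM /= horner_mx_C !horner_mx_X.
rewrite !mulmxDr mul_mx_scalar -!scalemxAr -[k * k]/(k *m k) !mulmxA.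
by rewrite !scalemxAl -!mul_scalar_mx -!mx11_scalar.
Qed.

Lemma commutator_on_cyclic (a c k Z : 'M[F]_n.+1) (v : 'rV[F]_n.+1) :
  comm_mx a k -> comm_mx c k -> (v <= Z)%MS -> stablemx Z a -> stablemx Z c ->
  (forall w : 'rV_n.+1, (w <= Z)%MS -> exists p, w = v *m horner_mx k p) ->
  Z *m (a *m c - c *m a) = 0.
Proof.
move=> ak ck vZ Za Zc Zcyc.
have v_image f : stablemx Z f -> exists p, v *m f = v *m horner_mx k p.
  by move=> Zf; apply: Zcyc; exact: submx_trans (submxMr f vZ) Zf.
have [q vaq] := v_image _ Za; have [r vcr] := v_image _ Zc.
have swap f g s t p : comm_mx f k -> comm_mx g k ->
    v *m f = v *m horner_mx k s -> v *m g = v *m horner_mx k t ->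
    v *m horner_mx k p *m f *m g =
      v *m horner_mx k t *m horner_mx k s *m horner_mx k p.
  move=> fk gk vf vg.
  rewrite -(mulmxA v) -(comm_mx_horner p fk) mulmxA vf -(mulmxA _ _ g).
  rewrite -(comm_mx_horner p gk) mulmxA -(mulmxA v) -(comm_mx_horner s gk).
  by rewrite mulmxA vg.
apply/row_matrixP => i; rewrite row_mul row0.
have [p ->] := Zcyc _ (row_sub i Z).
rewrite mulmxBr !mulmxA (swap _ _ _ _ _ ak ck vaq vcr) (swap _ _ _ _ _ ck ak vcr vaq).
have qr : horner_mx k r *m horner_mx k q = horner_mx k q *m horner_mx k r.
  exact: comm_horner_mx2.
by rewrite -(mulmxA v) qr mulmxA subrr.
Qed.

End Cyclic.

Section CompleteFlag.

Variables (F : fieldType) (n : nat) (V : nat -> 'M[F]_n).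
Hypotheses (V0 : V 0 = 0) (V_mono : forall i, (V i <= V i.+1)%MS).
Hypotheses (V_step : forall i, (\rank (V i.+1) <= (\rank (V i)).+1)%N).
Hypothesis V_full : row_full (V n).

Definition shifts_flag k (M : 'M[F]_n) :=
  forall i, (V (i + k) *m (M - 1%:M) <= V i)%MS.

Lemma flag_homo : {homo V : i j / (i <= j)%N >-> (i <= j)%MS}.
Proof.
exact: homo_leq (@submx_refl F n n)
  (fun B A C => @submx_trans F n n n n A B C) V_mono.
Qed.

Lemma shifts_flag0 M : (forall i, stablemx (V i) M) -> shifts_flag 0 M.
Proof. by move=> VM i; rewrite addn0 stablemxD ?stablemxN ?stablemxC. Qed.

Lemma shifts_flag_stable k M : shifts_flag k M -> forall i, stablemx (V i) M.
Proof.
move=> Mk i; rewrite -[M](subrK 1%:M) stablemxD ?stablemxC //.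
apply: submx_trans (submxMr _ (flag_homo (_ : i <= i - k + k)%N)) _; first by lia.
by apply: submx_trans (Mk _) _; apply: flag_homo; rewrite leq_subr.
Qed.

Lemma shifts_flag1 k : shifts_flag k 1%:M.
Proof. by move=> i; rewrite subrr mulmx0 sub0mx. Qed.

Lemma shifts_flagM k M N :
  shifts_flag k M -> shifts_flag k N -> shifts_flag k (M *m N).
Proof.
move=> Mk Nk i; have -> : M *m N - 1%:M = (M - 1%:M) *m N + (N - 1%:M).
  by rewrite mulmxBl mul1mx addrA subrK.
rewrite mulmxDr mulmxA addmx_sub //.
exact: submx_trans (submxMr N (Mk i)) (shifts_flag_stable Nk i).
Qed.

Lemma shifts_flagV k M :
  M \in unitmx -> shifts_flag k M -> shifts_flag k (invmx M).
Proof.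
move=> Mu Mk i; have -> : invmx M - 1%:M = - (invmx M *m (M - 1%:M)).
  by rewrite mulmxBr mulmx1 mulVmx // opprB.
rewrite mulmxN eqmx_opp mulmxA; apply: submx_trans (Mk i).
by apply: submxMr; apply: stablemx_invmx => //; apply: shifts_flag_stable Mk _.
Qed.

Lemma shifts_flag_commutator k M N : shifts_flag k M -> shifts_flag k N ->
  forall i, (V (i + k.+1) *m (M *m N - N *m M) <= V i)%MS.
Proof.
move=> Mk Nk i; case: k Mk Nk => [|k] Mk Nk.
  have Vi := V_mono i.
  have VM := shifts_flag_stable Mk; have VN := shifts_flag_stable Nk.
  have [c Mc] := scalar_on_quotient Vi (V_step i) (VM _) (VM _).
  have [d Nd] := scalar_on_quotient Vi (V_step i) (VN _) (VN _).
  rewrite addn1; apply: commutator_sub Mc _ Nd _;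
    by rewrite stablemxD ?stablemxN ?stablemxC.
have Vi1 : (V i.+1 <= V (i + k.+1))%MS by apply: flag_homo; lia.
apply: (commutator_sub (c := 1) (d := 1) (U := V i.+1) (U' := V i.+1)).
- by have := Mk i.+1; rewrite addSnnS.
- exact: submx_trans (submxMr _ Vi1) (Nk i).
- by have := Nk i.+1; rewrite addSnnS.
- exact: submx_trans (submxMr _ Vi1) (Mk i).
Qed.

Lemma shifts_flag_commg k M N : M \in unitmx -> N \in unitmx ->
  shifts_flag k M -> shifts_flag k N ->
  shifts_flag k.+1 (invmx M *m invmx N *m M *m N).
Proof.
move=> Mu Nu Mk Nk i.
have -> : invmx M *m invmx N *m M *m N - 1%:M =
    invmx M *m invmx N *m (M *m N - N *m M).
  by rewrite mulmxBr !mulmxA -(mulmxA (invmx M) (invmx N) N) mulVmx // mulmx1 mulVmx.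
rewrite mulmxA; apply: submx_trans (shifts_flag_commutator Mk Nk i); apply: submxMr.
have VMV := stablemx_invmx Mu (shifts_flag_stable Mk _).
have VNV := stablemx_invmx Nu (shifts_flag_stable Nk _).
exact: stablemxM.
Qed.

Lemma shifts_flag_full M : shifts_flag n M -> M = 1%:M.
Proof.
move=> /(_ 0); rewrite V0 submx0 => /eqP VM0; apply/eqP; rewrite -subr_eq0.
by apply/eqP/(row_full_inj V_full); rewrite VM0 mulmx0.
Qed.

End CompleteFlag.

Section Representation.

Variables (T : Type) (mul : T -> T -> T) (one : T) (inv : T -> T).
Variables (F : fieldType) (n : nat) (phi : T -> 'M[F]_n).
Hypotheses (HG : is_group mul one inv) (phi_unit : forall g, phi g \in unitmx).
Hypotheses (phiM : forall x y, phi (mul x y) = phi x *m phi y).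
Hypothesis phi_inj : injective phi.

Lemma phi1 : phi one = 1%:M.
Proof.
case: HG => _ mul1x _ _ _.
by rewrite -[phi one]mulmx1 -(mulmxV (phi_unit one)) mulmxA -phiM mul1x.
Qed.

Lemma phiV x : phi (inv x) = invmx (phi x).
Proof.
case: HG => _ _ _ mulVx _.
by rewrite -[phi (inv x)]mulmx1 -(mulmxV (phi_unit x)) mulmxA -phiM mulVx phi1 mul1mx.
Qed.

Theorem soluble_gen_of_flag (V : nat -> 'M[F]_n) (S : T -> Prop) :
  V 0 = 0 -> (forall i, (V i <= V i.+1)%MS) ->
  (forall i, (\rank (V i.+1) <= (\rank (V i)).+1)%N) -> row_full (V n) ->
  (forall s, S s -> forall i, stablemx (V i) (phi s)) ->
  soluble mul one inv (gen mul one inv S).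
Proof.
move=> V0 V_mono V_step V_full VS.
apply: (@soluble_gen_of_chain _ _ _ _ S (fun k x => shifts_flag V k (phi x)) n).
- move=> k; split=> [|x y|x]; rewrite ?phi1 ?phiM ?phiV; first exact: shifts_flag1.
    exact: shifts_flagM.
  exact: shifts_flagV.
- by move=> s /VS; apply: shifts_flag0.
- by move=> k x y; rewrite /commg !phiM !phiV mulmxA; apply: shifts_flag_commg.
- by move=> x /(shifts_flag_full V0 V_full); rewrite -phi1 => /phi_inj.
Qed.

End Representation.

Definition common_flag (F : fieldType) (a b : 'M[F]_3) : Prop :=
  exists l p : 'M[F]_3, [/\ \rank l = 1%N, \rank p = 2%N, (l <= p)%MS,
    stablemx l a && stablemx l b & stablemx p a && stablemx p b].

Section NoCommonFlag.

Variables (F : fieldType) (a c : 'M[F]_3).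
Hypotheses (not_ac : ~ comm_mx a c) (no_flag : ~ common_flag a c).

Lemma stable_line_notin_plane (l p : 'M[F]_3) :
  \rank l = 1%N -> \rank p = 2%N -> stablemx l a -> stablemx l c ->
  stablemx p a -> stablemx p c -> ~~ (l <= p)%MS.
Proof.
move=> rl rp la lc pa pc; apply/negP => lp.
by apply: no_flag; exists l, p; rewrite la lc pa pc.
Qed.

Lemma plane_minimal_stable (X p : 'M[F]_3) :
  \rank p = 2%N -> stablemx p a -> stablemx p c ->
  (X <= p)%MS -> X != 0 -> stablemx X a -> stablemx X c -> (p <= X)%MS.
Proof.
move=> rp pa pc Xp X0 Xa Xc.
have /mxrank_leqif_sup[rXp <-] := Xp.
rewrite -mxrank_eq0 in X0; rewrite rp in rXp *.
have [rX1|] := eqVneq (\rank X) 1%N; last by lia.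
by have /negP := stable_line_notin_plane rX1 rp Xa Xc pa pc.
Qed.

Lemma plane_stable_of_comm (p k : 'M[F]_3) :
  \rank p = 2%N -> stablemx p a -> stablemx p c ->
  k \in unitmx -> comm_mx a k -> comm_mx c k -> stablemx p k.
Proof.
move=> rp pa pc ku ak ck.
have rpk : \rank (p *m k) = 2%N by rewrite mxrankMfree ?row_free_unit.
have X0 : (p *m k :&: p)%MS != 0.
  rewrite -mxrank_eq0; have := mxrank_sum_cap (p *m k) p.
  by have := rank_leq_col (p *m k + p)%MS; rewrite rpk rp; lia.
have Xa := stablemx_cap (stablemx_mul_comm ak pa) pa.
have Xc := stablemx_cap (stablemx_mul_comm ck pc) pc.
have p_pk : (p <= p *m k)%MS.
  exact: submx_trans (plane_minimal_stable rp pa pc (capmxSr _ _) X0 Xa Xc) (capmxSl _ _).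
by have /mxrank_leqif_sup[_ <-] := p_pk; rewrite rpk rp.
Qed.

Lemma eigenvalue_of_comm (y : 'M[F]_3) :
  comm_mx a y -> comm_mx c y -> exists m, eigenvalue y m.
Proof.
move=> ay cy.
have [v _ v0] : exists2 v : 'rV[F]_3, (v <= 1%:M)%MS & v != 0.
  by apply/rowV0Pn; rewrite -mxrank_eq0 mxrank1.
have [/eigenvectorP[m vm]|vy] := boolP (stablemx v y).
  by exists m; apply/rowV0Pn; exists v.
set Z := (v + v *m y)%MS.
have rZ : \rank Z = 2%N by rewrite mxrank_adds_row // rank_rV v0.
have [vyy|vyy] := boolP (v *m y *m y <= Z)%MS.
  have Zy : stablemx Z y by rewrite addsmxMr addsmx_sub addsmxSr vyy.
  have [|m /mxrankS] := scalar_on_quotient (submx1 Z) _ (submx1 _) Zy.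
    by rewrite mxrank1 rZ.
  rewrite mul1mx rZ => rym; exists m.
  by rewrite /eigenvalue /eigenspace -mxrank_eq0 mxrank_ker; lia.
(* Otherwise v is a cyclic vector of y. *)
exfalso; apply: not_ac; apply/eqP; rewrite -subr_eq0 -[_ - _]mul1mx.
apply/eqP/(commutator_on_cyclic ay cy (submx1 v) (submx1 _) (submx1 _)) => w _.
apply: cyclic_span; apply: submx_trans (submx1 w) _.
by rewrite sub1mx /row_full mxrank_adds_row // rZ.
Qed.

Lemma stable_line_plane_of_comm (y : 'M[F]_3) :
  comm_mx a y -> comm_mx c y -> ~~ is_scalar_mx y ->
  exists l p : 'M[F]_3, [/\ \rank l = 1%N, \rank p = 2%N &
    [&& stablemx l a, stablemx l c, stablemx p a & stablemx p c]].
Proof.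
move=> ay cy ny; have [m ym] := eigenvalue_of_comm ay cy.
set E := eigenspace y m; set I := y - m%:M.
have Is f : comm_mx f y -> stablemx I f.
  by move=> fy; apply/comm_mx_stable/comm_mx_sym/comm_mxB => //; apply: comm_mx_scalar.
have Es f : comm_mx f y -> stablemx E f.
  by move=> fy; apply/comm_mx_stable_eigenspace/comm_mx_sym.
have rE : \rank E = (3 - \rank I)%N by rewrite mxrank_ker.
have E0 : \rank E != 0%N by rewrite mxrank_eq0.
have I0 : \rank I != 0%N.
  by rewrite mxrank_eq0 subr_eq0; apply: contra ny => /eqP ->; apply: scalar_mx_is_scalar.
have := rank_leq_col I; have [rI1|rI1] := eqVneq (\rank I) 1%N => rI.
  by exists I, E; rewrite rI1 rE rI1 !Is ?Es.
by exists E, I; rewrite rE; split; [lia | lia | rewrite !Is ?Es].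
Qed.

Lemma stable_plane_sub_eigenspace (l p k : 'M[F]_3) :
  \rank l = 1%N -> \rank p = 2%N -> stablemx l a -> stablemx l c ->
  stablemx p a -> stablemx p c -> comm_mx a k -> comm_mx c k -> stablemx p k ->
  exists m, (p <= eigenspace k m)%MS.
Proof.
move=> rl rp la lc pa pc ak ck pk.
have [v vp v0] : exists2 v : 'rV[F]_3, (v <= p)%MS & v != 0.
  by apply/rowV0Pn; rewrite -mxrank_eq0 rp.
have [/eigenvectorP[m vm]|vk] := boolP (stablemx v k).
  have Es f : comm_mx f k -> stablemx (eigenspace k m) f.
    by move=> fk; apply/comm_mx_stable_eigenspace/comm_mx_sym.
  exists m; apply: submx_trans (capmxSr p (eigenspace k m)).
  apply: plane_minimal_stable; rewrite ?capmxSl ?stablemx_cap ?Es //.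
  by apply/rowV0Pn; exists v; rewrite // sub_capmx vp.
(* Otherwise v is a cyclic vector of k on p, and a, c commute on p and on l. *)
exfalso; apply: not_ac; apply/eqP; rewrite -subr_eq0.
have /row_subPn[i lip] := stable_line_notin_plane rl rp la lc pa pc.
have pv : (p <= v + v *m k)%MS.
  have vp' : (v + v *m k <= p)%MS by rewrite addsmx_sub vp (submx_trans (submxMr k vp)).
  by have /mxrank_leqif_sup[_ <-] := vp'; rewrite mxrank_adds_row // rank_rV v0 rp.
have p0 : p *m (a *m c - c *m a) = 0.
  apply: (commutator_on_cyclic ak ck vp pa pc) => w wp; apply: cyclic_span.
  exact: submx_trans wp (submx_trans pv (addsmxSl _ _)).
have li0 : row i l *m (a *m c - c *m a) = 0.
  by rewrite -row_mul commutator_on_line ?rl ?row0.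
have full : (1%:M <= p + row i l)%MS.
  by rewrite sub1mx /row_full mxrank_adds_row // rp.
have : (1%:M <= kermx (a *m c - c *m a))%MS.
  by apply: submx_trans full _; rewrite addsmx_sub; apply/andP; split; apply/sub_kermxP.
by move/sub_kermxP; rewrite mul1mx => ->.
Qed.

Lemma common_flag_of_centralizing (b d : 'M[F]_3) :
  b \in unitmx -> d \in unitmx -> comm_mx a b -> comm_mx c b ->
  comm_mx a d -> comm_mx c d -> ~ comm_mx b d -> common_flag b d.
Proof.
move=> bu du ab cb ad cd not_bd.
have [y [ay cy ny]] : exists y, [/\ comm_mx a y, comm_mx c y & ~~ is_scalar_mx y].
  have [/is_scalar_mxP[x bx]|nb] := boolP (is_scalar_mx b); last by exists b.
  exists d; split=> //; apply/negP => /is_scalar_mxP[x' dx'].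
  by apply: not_bd; rewrite bx dx'; apply: comm_mx_scalar.
have [l [p [rl rp /and4P[la lc pa pc]]]] := stable_line_plane_of_comm ay cy ny.
have pb := plane_stable_of_comm rp pa pc bu ab cb.
have pd := plane_stable_of_comm rp pa pc du ad cd.
have [mb pmb] := stable_plane_sub_eigenspace rl rp la lc pa pc ab cb pb.
have [md pmd] := stable_plane_sub_eigenspace rl rp la lc pa pc ad cd pd.
have [v vp v0] : exists2 v : 'rV[F]_3, (v <= p)%MS & v != 0.
  by apply/rowV0Pn; rewrite -mxrank_eq0 rp.
exists <<v>>%MS, p; rewrite !(eqmx_stable _ (genmxE v)) !genmxE rank_rV v0 rp vp pb pd.
split=> //; apply/andP.
by split; apply/eigenvectorP; [exists mb | exists md]; apply: submx_trans vp _.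
Qed.

End NoCommonFlag.

Lemma soluble_gen_of_common_flag (T : Type) (mul : T -> T -> T) (one : T)
    (inv : T -> T) (F : fieldType) (phi : T -> 'M[F]_3) :
  is_group mul one inv -> (forall g, phi g \in unitmx) ->
  (forall x y, phi (mul x y) = phi x *m phi y) -> injective phi ->
  forall x y, common_flag (phi x) (phi y) ->
  soluble mul one inv (gen mul one inv (fun z => z = x \/ z = y)).
Proof.
move=> HG phi_unit phiM phi_inj x y [l [p [rl rp lp /andP[lx ly] /andP[px py]]]].
apply: (soluble_gen_of_flag HG phi_unit phiM phi_inj (V := nth 1%:M [:: 0; l; p])).
- by [].
- by case=> [|[|[|i]]] //=; rewrite ?sub0mx ?submx1.
- by case=> [|[|[|i]]] //=; rewrite ?mxrank0 ?rl ?rp ?nth_nil ?mxrank1.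
- by rewrite /= /row_full mxrank1.
- by move=> s [->|->] [|[|[|i]]] //=; rewrite ?nth_nil ?submx1 //; apply: stable0mx.
Qed.

Theorem theorem2p3 (T : Type) (mul : T -> T -> T) (one : T) (inv : T -> T)
  (HG : is_group mul one inv) (A B C D : T)
  (hAB : mul A B = mul B A) (hBC : mul B C = mul C B)
  (hCD : mul C D = mul D C) (hDA : mul D A = mul A D)
  (hAC : ~ soluble mul one inv (gen mul one inv (fun x => x = A \/ x = C)))
  (hBD : ~ soluble mul one inv (gen mul one inv (fun x => x = B \/ x = D))) :
  forall F : fieldType, ~ embeds_in_GL3 mul F.
Proof.
move=> F [phi [phi_unit phiM phi_inj]].
have phi_comm x y : mul x y = mul y x -> comm_mx (phi x) (phi y).
  by rewrite /comm_mx -!phiM => ->.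
have not_comm x y : ~ soluble mul one inv (gen mul one inv (fun z => z = x \/ z = y)) ->
    ~ comm_mx (phi x) (phi y).
  move=> not_sol cxy; apply: not_sol; apply: (soluble_gen_abelian HG).
  by move=> u v [->|->] [->|->] //; apply: phi_inj; rewrite !phiM.
have no_flag x y : ~ soluble mul one inv (gen mul one inv (fun z => z = x \/ z = y)) ->
    ~ common_flag (phi x) (phi y).
  by move=> not_sol /(soluble_gen_of_common_flag HG phi_unit phiM phi_inj).
apply: (no_flag _ _ hBD).
apply: (common_flag_of_centralizing (not_comm _ _ hAC) (no_flag _ _ hAC)
  (phi_unit B) (phi_unit D) (phi_comm _ _ hAB) (phi_comm _ _ (esym hBC))
  (phi_comm _ _ (esym hDA)) (phi_comm _ _ hCD) (not_comm _ _ hBD)).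
Qed.
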